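(* Let $A=A_1A_2A_3$ and $B=B_1B_2B_3$ be triangles in the real projective plane that are perspective from a line $s$: for each permutation $(i,j,k)$ of $(1,2,3)$ the point $L_i=A_kA_j\cap B_kB_j$ lies on $s$. For each permutation $(i,j,k)$ of $(1,2,3)$ let $C_k=A_iB_j\cap A_jB_i$ (assuming general position so that these points are well defined). Then the triangle $C=C_1C_2C_3$ is perspective from the line $s$ to both $A$ and $B$; i.e., for each permutation $(i,j,k)$ the lines $C_iC_j$, $A_iA_j$, $B_iB_j$ all pass through the point $L_k\in s$.
   Context: Two configurations with a correspondence between their lines are perspective from a line $\ell$ if all intersection points of corresponding lines lie on $\ell$; for triangles the correspondence is $A_iA_j\leftrightarrow B_iB_j\leftrightarrow C_iC_j$. *)

(* The real projective plane RP^2 in homogeneous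
   coordinates: points and lines are nonzero row vectors of R^3
   (R : realType), a vector and its nonzero multiples denoting the same
   object; incidence is the vanishing of the dot product. *)
From mathcomp Require Import all_boot all_order all_algebra.
From mathcomp Require Import reals.
Set Implicit Arguments. Unset Strict Implicit. Unset Printing Implicit Defensive.
Import Order.TTheory GRing.Theory Num.Theory.
Local Open Scope ring_scope.

Section Proj.
Variable R : realType.
Implicit Types u v P Q X l m : 'rV[R]_3.

Definition c0 : 'I_3 := @Ordinal 3 0 isT.
Definition c1 : 'I_3 := @Ordinal 3 1 isT.
Definition c2 : 'I_3 := @Ordinal 3 2 isT.

Definition cross u v : 'rV[R]_3 :=
  \row_(k < 3)
    (if k == c0 then u 0 c1 * v 0 c2 - u 0 c2 * v 0 c1
     else if k == c1 then u 0 c2 * v 0 c0 - u 0 c0 * v 0 c2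
     else u 0 c0 * v 0 c1 - u 0 c1 * v 0 c0).

Definition dot u v : R := \sum_(k < 3) u 0 k * v 0 k.

Definition incident X l : Prop := dot X l = 0.

Definition proj_eq P Q : Prop := P != 0 /\ Q != 0 /\ cross P Q = 0.

Definition proj_distinct P Q : Prop := P != 0 /\ Q != 0 /\ cross P Q != 0.

Definition join P Q := cross P Q.
Definition meet l m := cross l m.

Definition collinear P Q X : Prop := dot X (cross P Q) = 0.

Definition triangle (A : 'I_3 -> 'rV[R]_3) : Prop :=
  [/\ forall i, A i != 0 & ~ collinear (A c0) (A c1) (A c2)].

End Proj.

(* If A and B are perspective from the axis s, the three points where
   corresponding sides meet lie on s, so their determinant vanishes.  This
   determinant factors as [A] [B] D, where [A], [B] are the determinants of
   the vertices and D is the determinant of the lines A_iB_i; as the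
   triangles are non-degenerate, D = 0, i.e. the lines A_iB_i are concurrent
   (converse of Desargues).  A second polynomial identity shows that the
   determinant of C_1, C_2 and L_3 is a multiple of D, hence C_1C_2 passes
   through L_3; the other sides follow by relabelling. *)
From mathcomp Require Import all_boot all_order all_algebra.
From mathcomp Require Import reals.
From mathcomp Require Import ring lra.
Import Order.TTheory GRing.Theory Num.Theory.
Local Open Scope ring_scope.

Lemma ord3P (i : 'I_3) : [\/ i = c0, i = c1 | i = c2].
Proof.
by case: i => [[|[|[|n]]] lt_i3] //; [apply: Or31 | apply: Or32 | apply: Or33];
  apply: val_inj.
Qed.

Lemma ord3_other {i j : 'I_3} : i != j ->
  exists k, [/\ j != k, i != k, k != i & k != j].
Proof.
by case: (ord3P i) => ->; case: (ord3P j) => -> //= _;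
  [exists c2 | exists c1 | exists c2 | exists c0 | exists c1 | exists c0].
Qed.

Section Projective.
Context {R : realType}.
Implicit Types (u v P Q X l s : 'rV[R]_3) (a b : R).

Lemma dotE u v : dot u v = u 0 c0 * v 0 c0 + u 0 c1 * v 0 c1 + u 0 c2 * v 0 c2.
Proof.
rewrite /dot !big_ord_recl big_ord0 addr0 addrA.
by congr (_ + _ + _); congr (u 0 _ * v 0 _); apply: val_inj.
Qed.

Lemma dot_cross_l u v : dot (cross u v) u = 0.
Proof. by rewrite !dotE /cross !mxE /=; ring. Qed.

Lemma dot_cross_r u v : dot (cross u v) v = 0.
Proof. by rewrite !dotE /cross !mxE /=; ring. Qed.

Lemma dot_crossZ X u v a b :
  dot X (cross (a *: u) (b *: v)) = a * b * dot X (cross u v).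
Proof. by rewrite !dotE /cross !mxE /=; ring. Qed.

Lemma proj_eq_scale P Q : proj_eq P Q -> exists2 k : R, k != 0 & P = k *: Q.
Proof.
move=> [nzP [nzQ PQ]].
have [t Qt] : exists t, Q 0 t != 0.
  apply/existsP; apply: contraNT nzQ; rewrite negb_exists => /forallP Q0.
  by apply/eqP/rowP => t; rewrite mxE; apply/eqP/negPn.
have PQ_coord (x y : 'I_3) : P 0 x * Q 0 y = P 0 y * Q 0 x.
  have coord c := congr1 (fun v : 'rV[R]_3 => v 0 c) PQ.
  move: (coord c0) (coord c1) (coord c2); rewrite !mxE /= => e0 e1 e2.
  by case: (ord3P x) => ->; case: (ord3P y) => ->; lra.
have defP : P = (P 0 t / Q 0 t) *: Q.
  by apply/rowP => x; rewrite mxE mulrAC PQ_coord mulfK.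
exists (P 0 t / Q 0 t) => //.
by apply: contraNneq nzP => k0; rewrite defP k0 scale0r.
Qed.

Lemma collinear_proj_eq P P' Q Q' X :
  proj_eq P P' -> proj_eq Q Q' -> collinear P' Q' X -> collinear P Q X.
Proof.
move=> /proj_eq_scale [a _ ->] /proj_eq_scale [b _ ->].
by rewrite /collinear dot_crossZ => ->; rewrite mulr0.
Qed.

Lemma triple_product_scale l1 l2 l3 s :
  dot l3 (cross l1 l2) *: s =
  dot l1 s *: cross l2 l3 + dot l2 s *: cross l3 l1 + dot l3 s *: cross l1 l2.
Proof.
apply/rowP => t; rewrite !mxE !dotE /cross !mxE /=.
by case: (ord3P t) => ->; rewrite /=; ring.
Qed.

Lemma collinear_of_incident l1 l2 l3 s : s != 0 ->
  incident l1 s -> incident l2 s -> incident l3 s -> collinear l1 l2 l3.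
Proof.
move=> nz_s l1s l2s l3s; have := triple_product_scale l1 l2 l3 s.
rewrite l1s l2s l3s !scale0r !addr0 => /eqP.
by rewrite scaler_eq0 (negbTE nz_s) orbF => /eqP.
Qed.

Section TwoTriangles.
Context {a1 a2 a3 b1 b2 b3 : 'rV[R]_3}.

Let L1 := meet (join a2 a3) (join b2 b3).
Let L2 := meet (join a3 a1) (join b3 b1).
Let L3 := meet (join a1 a2) (join b1 b2).

Lemma desargues_identity :
  dot L3 (cross L1 L2) =
  dot a3 (cross a1 a2) * dot b3 (cross b1 b2) *
  dot (join a3 b3) (cross (join a1 b1) (join a2 b2)).
Proof. by rewrite /L1 /L2 /L3 /meet /join !dotE /cross !mxE /=; ring. Qed.

Lemma desargues_converse :
  ~ collinear a1 a2 a3 -> ~ collinear b1 b2 b3 -> collinear L1 L2 L3 ->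
  collinear (join a1 b1) (join a2 b2) (join a3 b3).
Proof.
rewrite /collinear desargues_identity => /eqP nA /eqP nB /eqP.
by rewrite mulf_eq0 (negbTE (mulf_neq0 nA nB)) => /eqP.
Qed.

Lemma diagonal_points_identity :
  dot L3 (cross (meet (join a2 b3) (join a3 b2)) (meet (join a3 b1) (join a1 b3))) =
  dot (join a3 b3) (cross (join a1 b1) (join a2 b2)) *
  (dot a3 (cross a1 a2) * dot b3 (cross b1 b2)
   - dot b1 (cross a1 a2) * dot b3 (cross a3 b2)
   + dot b2 (cross a1 a2) * dot b3 (cross a3 b1)).
Proof. by rewrite /L3 /meet /join !dotE /cross !mxE /=; ring. Qed.

Lemma collinear_diagonal_points_of_concurrent :
  collinear (join a1 b1) (join a2 b2) (join a3 b3) ->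
  collinear (meet (join a2 b3) (join a3 b2)) (meet (join a3 b1) (join a1 b3)) L3.
Proof. by rewrite /collinear diagonal_points_identity => ->; rewrite mul0r. Qed.

Lemma perspective_axis_diagonal_points {s c1 c2 : 'rV[R]_3} :
  ~ collinear a1 a2 a3 -> ~ collinear b1 b2 b3 -> s != 0 ->
  incident L1 s -> incident L2 s -> incident L3 s ->
  proj_eq c1 (meet (join a2 b3) (join a3 b2)) ->
  proj_eq c2 (meet (join a3 b1) (join a1 b3)) ->
  collinear c1 c2 L3.
Proof.
move=> nA nB nz_s L1s L2s L3s c1E c2E.
apply: collinear_proj_eq c1E c2E _.
apply/collinear_diagonal_points_of_concurrent/desargues_converse => //.
exact: collinear_of_incident nz_s L1s L2s L3s.
Qed.

End TwoTriangles.

Lemma triangle_noncollinear {A : 'I_3 -> 'rV[R]_3} {i j k : 'I_3} :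
  triangle A -> i != j -> j != k -> i != k -> ~ collinear (A i) (A j) (A k).
Proof.
move=> [_ nA]; rewrite /collinear => ij jk ik Aijk; apply: nA; move: Aijk.
case: (ord3P i) ij ik => ->; case: (ord3P j) jk => ->; case: (ord3P k) => -> //=;
  rewrite /collinear !dotE /cross !mxE /= => _ _ _; lra.
Qed.

End Projective.

Theorem theorem4 (R : realType) (A B C : 'I_3 -> 'rV[R]_3) (s : 'rV[R]_3) :
  triangle A -> triangle B -> s != 0 ->
  (* general position: corresponding sides are distinct lines *)
  (forall i j : 'I_3, i != j ->
     proj_distinct (join (A i) (A j)) (join (B i) (B j))) ->
  (* A and B are perspective from the line s: L_k = A_iA_j /\ B_iB_j lies on s *)
  (forall i j : 'I_3, i != j ->
     incident (meet (join (A i) (A j)) (join (B i) (B j))) s) ->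
  (* general position: C_k = A_iB_j /\ A_jB_i is well defined *)
  (forall i j : 'I_3, i != j ->
     proj_distinct (A i) (B j) /\
     proj_distinct (join (A i) (B j)) (join (A j) (B i))) ->
  (* C_k is the point A_iB_j /\ A_jB_i for every permutation (i,j,k) *)
  (forall i j k : 'I_3, i != j -> j != k -> i != k ->
     proj_eq (C k) (meet (join (A i) (B j)) (join (A j) (B i)))) ->
  (* conclusion: C_iC_j, A_iA_j, B_iB_j all pass through L_k (which is on s) *)
  forall i j : 'I_3, i != j ->
    let L := meet (join (A i) (A j)) (join (B i) (B j)) in
    [/\ collinear (C i) (C j) L, incident L (join (A i) (A j)),
        incident L (join (B i) (B j)) & incident L s].
Proof.
(* The general-position hypotheses only make the points and lines well
   defined; the incidences hold without them. *)
move=> triA triB nz_s _ persp _ defC i j ij L.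
have [k [jk ik ki kj]] := ord3_other ij.
have ji : j != i by rewrite eq_sym.
have nA := triangle_noncollinear triA ij jk ik.
have nB := triangle_noncollinear triB ij jk ik.
split; last exact: persp.
- exact: (perspective_axis_diagonal_points nA nB nz_s (persp j k jk)
          (persp k i ki) (persp i j ij) (defC j k i jk ki ji) (defC k i j ki ij kj)).
- by rewrite /incident /L /meet dot_cross_l.
- by rewrite /incident /L /meet dot_cross_r.
Qed.
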